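(* Let $\mathcal D_n=\{(\mathbf X_i,Y_i)\}_{i=1}^n$ where $\mathbf X_1,\dots,\mathbf X_n$ are i.i.d. uniform on $\{\pm1\}^d$ and the responses $(Y_1,\dots,Y_n)$ are independent of the covariates. Consider a tree fitted to $\mathcal D_n$ by a greedy tree algorithm with random seed $\Theta$, fix a query point $\mathbf x\in\{\pm1\}^d$, and let $J(\mathbf x;\mathcal D_n,\Theta)$ be the set of covariates split on along the query path of $\mathbf x$. Then for every nonnegative integer $t$, $$\mathbb P\{|J(\mathbf x;\mathcal D_n,\Theta)|\ge t\}\le\min\{n/2^t,1\},$$ and $\mathbb E\{|J(\mathbf x;\mathcal D_n,\Theta)|\}\le\log_2n+2$.
   Context: Greedy tree algorithm: grows a tree top-down from $\{\pm1\}^d$ over cells $C=\{\mathbf x:x_j=z_j,\ j\in J(C)\}$; each new cell is checked against a stopping condition and otherwise split into $C\cap\{x_k=\pm1\}$ on a maximizer over $k\notin J(C)$ of $\mathcal O(k;C,\mathcal D_n)=\mathcal F(\{(X_{ik},Y_i)\}_{i:\mathbf X_i\in C})$, with $\mathcal F$ fixed and invariant under $X_{ik}\mapsto-X_{ik}$; the tree may be pruned. The query path of $\mathbf x$ is the root-to-leaf path to the leaf containing $\mathbf x$; $J(\mathbf x;\mathcal D_n,\Theta)$ is the set of split covariates of its internal nodes (its cardinality equals the path length). *)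

From mathcomp Require Import all_boot all_order all_algebra.
From mathcomp Require Import all_classical all_reals all_analysis.

Set Implicit Arguments.
Unset Strict Implicit.
Unset Printing Implicit Defensive.

Import Order.TTheory GRing.Theory Num.Theory.
Local Open Scope ring_scope.

(* Points of {+-1}^d, encoded with true = +1 and false = -1;
   sign flip x_k |-> -x_k is negb. *)
Definition hcube (d : nat) := {ffun 'I_d -> bool}.

Definition data (n d : nat) := {ffun 'I_n -> hcube d}.

(* A cell C = {x : x_j = z_j, j in J(C)}: c j = Some z_j if j in J(C),
   None otherwise. *)
Definition cell (d : nat) := {ffun 'I_d -> option bool}.

Definition root_cell (d : nat) : cell d := [ffun => None].

Definition in_cell (d : nat) (c : cell d) (z : hcube d) : bool :=
  [forall j, if c j is Some b then z j == b else true].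

Definition Jc (d : nat) (c : cell d) : {set 'I_d} := [set j | c j != None].

Definition child (d : nat) (c : cell d) (k : 'I_d) (b : bool) : cell d :=
  [ffun j => if j == k then Some b else c j].

Definition objective (R : realType) (d n : nat) (TY : Type)
  (F : seq (bool * TY) -> R) (X : data n d) (Y : 'I_n -> TY)
  (c : cell d) (k : 'I_d) : R :=
  F [seq (X i k, Y i) | i <- enum 'I_n & in_cell c (X i)].

Definition maximizers (R : realType) (d n : nat) (TY : Type)
  (F : seq (bool * TY) -> R) (X : data n d) (Y : 'I_n -> TY)
  (c : cell d) : {set 'I_d} :=
  [set k | (k \notin Jc c) &&
     [forall k', (k' \notin Jc c) ==>
        (objective F X Y c k' <= objective F X Y c k)]].

(* A node is a leaf if no covariate remains, if the stopping condition
   holds, or if it was collapsed by pruning. *)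
Fixpoint qpath_rec (d : nat) (leaf : cell d -> bool)
  (splitv : cell d -> 'I_d) (x : hcube d) (fuel : nat) (c : cell d)
  : seq 'I_d :=
  match fuel with
  | 0 => [::]
  | f.+1 =>
      if (#|Jc c| == d) || leaf c then [::]
      else let k := splitv c in k :: qpath_rec leaf splitv x f (child c k (x k))
  end.

Definition Jquery (R : realType) (d n : nat) (TY TH : Type)
  (F : seq (bool * TY) -> R)
  (sel : TH -> {set 'I_d} -> {set 'I_d} -> 'I_d)
  (stop : TH -> data n d -> ('I_n -> TY) -> cell d -> bool)
  (prune : TH -> data n d -> ('I_n -> TY) -> cell d -> bool)
  (th : TH) (X : data n d) (Y : 'I_n -> TY) (x : hcube d) : {set 'I_d} :=
  [set k in qpath_rec (fun c => stop th X Y c || prune th X Y c)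
                      (fun c => sel th (Jc c) (maximizers F X Y c))
                      x d (root_cell d)].

Local Open Scope ereal_scope.

(* P{|J(x;D_n,Theta)| >= t}: X uniform on ({+-1}^d)^n (i.e. X_i i.i.d.
   uniform), independent of (Y, Theta) whose joint law is mu. *)
Definition probJge (R : realType) (d n : nat) (TY TH : Type)
  (F : seq (bool * TY) -> R)
  (sel : TH -> {set 'I_d} -> {set 'I_d} -> 'I_d)
  (stop : TH -> data n d -> ('I_n -> TY) -> cell d -> bool)
  (prune : TH -> data n d -> ('I_n -> TY) -> cell d -> bool)
  (x : hcube d) (dT : measure_display) (T : measurableType dT)
  (mu : probability T R) (Yr : T -> 'I_n -> TY) (Thr : T -> TH) (t : nat)
  : \bar R :=
  \int[mu]_w
    ((#|[set X : data n d |
          (t <= #|Jquery F sel stop prune (Thr w) X (Yr w) x|)%N]|%:R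
      / #|{: data n d}|%:R)%R)%:E.

Definition expJ (R : realType) (d n : nat) (TY TH : Type)
  (F : seq (bool * TY) -> R)
  (sel : TH -> {set 'I_d} -> {set 'I_d} -> 'I_d)
  (stop : TH -> data n d -> ('I_n -> TY) -> cell d -> bool)
  (prune : TH -> data n d -> ('I_n -> TY) -> cell d -> bool)
  (x : hcube d) (dT : measure_display) (T : measurableType dT)
  (mu : probability T R) (Yr : T -> 'I_n -> TY) (Thr : T -> TH)
  : \bar R :=
  \int[mu]_w
    (((\sum_(X : data n d)
         (#|Jquery F sel stop prune (Thr w) X (Yr w) x|)%:R)
      / #|{: data n d}|%:R)%R)%:E.

(* Fix the seed and the responses.  At depth [j] the query path sits in a cell
   whose fixed coordinates do not include the covariate [k] it is split on.
   Flipping the sign of coordinate [k] in every sample point therefore leaves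
   the path down to depth [j] and the choice of [k] unchanged (the split
   criterion is sign-invariant) while swapping the points sent to the two
   children.  Averaging over uniform covariates, the expected number of sample
   points in the depth-[j] cell thus halves at every level and equals [n/2^j].
   A node is split only if it holds at least two points, so by Markov
   P(|J| > t) <= n/2^(t+1); summing min(n/2^(t+1), 1) over [t] gives at most
   log2 n + 2.  Both bounds hold for every value of the responses and the seed,
   hence also after integrating over them. *)

From mathcomp Require Import all_boot all_order all_algebra.
From mathcomp Require Import all_classical all_reals all_analysis.
From mathcomp Require Import zify lra.

Import Order.TTheory GRing.Theory Num.Theory.
Local Open Scope ring_scope.

Section IntegralBound.
Local Open Scope ereal_scope.
Context (R : realType) (dT : measure_display) (T : measurableType dT).

(* No measurability is needed: the integral of a nonnegative function is the
   supremum of the integrals of the simple functions below it. *)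
Lemma ge0_le_integral_any (mu : {measure set T -> \bar R}) (f g : T -> \bar R) :
  (forall w, 0 <= f w) -> (forall w, f w <= g w) ->
  \int[mu]_w f w <= \int[mu]_w g w.
Proof.
move=> f0 fg; have g0 w : 0 <= g w by exact: le_trans (f0 w) (fg w).
rewrite !ge0_integralTE //; apply: ereal_sup_le => _ [h /= hf <-].
by exists h => //= w; exact: le_trans (hf w) (fg w).
Qed.

Lemma integral_le_const (mu : probability T R) (f : T -> R) (B : R) :
  (forall w, 0 <= f w)%R -> (forall w, f w <= B)%R ->
  \int[mu]_w (f w)%:E <= B%:E.
Proof.
move=> f0 fB; have <- : \int[mu]_w (cst B w)%:E = B%:E.
  by have := expectation_cst mu B; rewrite unlock.
by apply: ge0_le_integral_any => w; rewrite lee_fin.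
Qed.

End IntegralBound.

Lemma sum_nat_lt (D m : nat) : (\sum_(t < D) (t < m : nat))%N = minn D m.
Proof.
elim: D => [|D IH]; first by rewrite big_ord0 min0n.
by rewrite big_ord_recr /= IH; case: (ltnP D m) => /= ? ; lia.
Qed.

Lemma sum_card_layers {T : finType} {f : T -> nat} {D : nat} :
  (forall X, f X <= D)%N ->
  (\sum_X f X = \sum_(t < D) #|[set X | t < f X]|)%N.
Proof.
move=> fD; under eq_bigr => X _ do rewrite -(minn_idPr (fD X)) -sum_nat_lt.
rewrite exchange_big; apply: eq_bigr => t _.
by rewrite -sum1_card [RHS]big_mkcond; apply: eq_bigr => X _; rewrite inE.
Qed.

Lemma sum_inv_pow2_tail (R : realFieldType) (m D : nat) :
  \sum_(t < D | (m <= t)%N) (2 ^+ t.+1)^-1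
  = (2 ^+ m)^-1 - (2 ^+ maxn m D)^-1 :> R.
Proof.
elim: D => [|D IH]; first by rewrite big_pred0 ?maxn0 ?subrr // => -[].
rewrite big_mkcond big_ord_recr /= -big_mkcond IH.
have [mD|Dm] := leqP m D.
  rewrite !(maxn_idPr _) ?(leq_trans mD) // exprS invfM; lra.
by rewrite !(maxn_idPl _) // addr0.
Qed.

Lemma ratio_le_min_halvings (R : realFieldType) (a N n t : nat) :
  (0 < N)%N -> (a * 2 ^ t <= n * N)%N -> (a <= N)%N ->
  a%:R / N%:R <= Num.min (n%:R / 2 ^+ t) 1 :> R.
Proof.
move=> N0 atn aN; rewrite le_min; apply/andP; split.
  rewrite ler_pdivrMr ?ltr0n // mulrAC ler_pdivlMr ?exprn_gt0 ?ltr0n //.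
  by rewrite -natrX -!natrM ler_nat.
by rewrite ler_pdivrMr ?ltr0n // mul1r ler_nat.
Qed.

Lemma sum_min_halvings_le (R : realType) (n D : nat) : (0 < n)%N ->
  \sum_(t < D) Num.min (n%:R / 2 ^+ t.+1) 1 <= ln (n%:R : R) / ln 2 + 2.
Proof.
(* Terms of index below [m = trunc_log 2 n] are at most 1, the others form a
   geometric tail of sum at most [n / 2^m < 2]. *)
move=> n0; pose m := trunc_log 2 n.
have ln2_gt0 : (0 : R) < ln 2 by rewrite ln_gt0 // ltr1n.
have term_le (t : 'I_D) : Num.min (n%:R / 2 ^+ t.+1) 1 <=
    (t < m : nat)%:R + (if (m <= t)%N then n%:R * (2 ^+ t.+1)^-1 else 0) :> R.
  by case: ltnP => _; rewrite ?addr0 ?add0r ?ge_min ?lexx ?orbT.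
apply: le_trans (ler_sum _ (fun t _ => term_le t)) _.
rewrite big_split /= -natr_sum sum_nat_lt -big_mkcond /= -mulr_sumr.
rewrite sum_inv_pow2_tail.
have pow_m_le : (2 ^ m <= n)%N by exact: trunc_logP.
have lt_pow_m1 : (n < 2 ^ m.+1)%N by exact: trunc_log_ltn.
apply: lerD.
  have ln_pow_m : ln (2 ^+ m) <= ln (n%:R : R).
    by rewrite ler_ln ?posrE ?exprn_gt0 ?ltr0n // -natrX ler_nat.
  rewrite ler_pdivlMr // (le_trans _ ln_pow_m) // lnXn // -[_ *+ m]mulr_natl.
  by rewrite ler_pM2r // ler_nat geq_minr.
have tail_ge0 : 0 <= n%:R * (2 ^+ maxn m D)^-1 :> R.
  by rewrite mulr_ge0 ?invr_ge0 ?exprn_ge0.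
have : n%:R * (2 ^+ m)^-1 <= 2 :> R.
  by rewrite ler_pdivrMr ?exprn_gt0 // -exprS -natrX ler_nat ltnW.
rewrite mulrBr; lra.
Qed.

Definition flip_at {d n : nat} (k : 'I_d) (X : data n d) : data n d :=
  [ffun i => [ffun j => if j == k then ~~ X i j else X i j]].

Definition ncell {d n : nat} (X : data n d) (c : cell d) : nat :=
  #|[set i | in_cell c (X i)]|.

Section Cells.
Context {d n : nat}.
Implicit Types (X : data n d) (c : cell d) (k : 'I_d) (b : bool).

Lemma flip_atK k : involutive (@flip_at d n k).
Proof.
move=> X; apply/ffunP => i; apply/ffunP => j; rewrite !ffunE.
by case: eqP; rewrite ?negbK.
Qed.

Lemma notin_JcE c k : (k \notin Jc c) = (c k == None).
Proof. by rewrite inE negbK. Qed.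

Lemma Jc_child c k b : Jc (child c k b) = k |: Jc c.
Proof. by apply/setP => j; rewrite !inE ffunE; case: (j == k). Qed.

Lemma card_Jc_root : #|Jc (root_cell d)| = 0%N.
Proof.
by apply/eqP; rewrite cards_eq0; apply/eqP/setP => j; rewrite !inE ffunE.
Qed.

Lemma in_cell_flip_at X c k i : c k = None ->
  in_cell c (flip_at k X i) = in_cell c (X i).
Proof.
move=> ck; apply: eq_forallb => j; rewrite !ffunE.
by case: eqP => // ->; rewrite ck.
Qed.

Lemma in_cell_child c k b (z : hcube d) : c k = None ->
  in_cell (child c k b) z = in_cell c z && (z k == b).
Proof.
move=> ck; apply/forallP/andP => [zc|[/forallP zc zk] j].
  split; last by have := zc k; rewrite ffunE eqxx.
  by apply/forallP => j; have := zc j; rewrite ffunE; case: eqP => // ->; rewrite ck.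
by rewrite ffunE; case: eqP => [->|_] //; exact: zc.
Qed.

Lemma ncell_root X : ncell X (root_cell d) = n.
Proof.
rewrite /ncell (_ : [set i | _] = [set: 'I_n]) ?cardsT ?card_ord //.
by apply/setP => i; rewrite !inE; apply/forallP => j; rewrite ffunE.
Qed.

Lemma ncell_child_flip_at X c k b : c k = None ->
  (ncell X (child c k b) + ncell (flip_at k X) (child c k b) = ncell X c)%N.
Proof.
move=> ck; rewrite /ncell.
rewrite -(cardsID [set i | X i k == b] [set i | in_cell c (X i)]).
congr (_ + _)%N; apply: eq_card => i;
  rewrite !inE !in_cell_child ?in_cell_flip_at //.
by rewrite !ffunE eqxx; case: (X i k); case: b; rewrite ?andbT ?andbF.
Qed.

End Cells.

Lemma size_qpath_rec {d : nat} (leaf : cell d -> bool)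
    (splitv : cell d -> 'I_d) (x : hcube d) (fuel : nat) (c : cell d) :
  (size (qpath_rec leaf splitv x fuel c) <= fuel)%N.
Proof. by elim: fuel c => [//|f IH] c /=; case: ifP => // _; exact: IH. Qed.

Lemma qpath_rec_internal {d : nat} {leaf : cell d -> bool}
    {splitv : cell d -> 'I_d} {x : hcube d} {fuel : nat} {c : cell d} {j : nat} :
  (j < size (qpath_rec leaf splitv x fuel c))%N ->
  ~~ leaf (iter j (fun c => child c (splitv c) (x (splitv c))) c).
Proof.
elim: fuel c j => [//|f IH] c j /=.
case: ifP => // /norP[_ internal] /=.
by case: j => [//|j]; rewrite ltnS iterSr => /IH.
Qed.

Section FlipInvariantSplits.
Context {d n : nat} {x : hcube d} {splitv : data n d -> cell d -> 'I_d}.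
Hypothesis splitv_flip_at : forall (k : 'I_d) (X : data n d) (c : cell d),
  c k = None -> splitv (flip_at k X) c = splitv X c.
Hypothesis splitv_fresh : forall (X : data n d) (c : cell d),
  (#|Jc c| < d)%N -> splitv X c \notin Jc c.
Implicit Types (X : data n d) (c : cell d) (k : 'I_d).

Definition descend X c := child c (splitv X c) (x (splitv X c)).

Definition path_cell X j := iter j (descend X) (root_cell d).

Lemma card_Jc_path_cell X j : (j <= d)%N -> #|Jc (path_cell X j)| = j.
Proof.
elim: j => [_|j IH jd]; first exact: card_Jc_root.
have jd' := ltnW jd; rewrite /path_cell iterS -/(path_cell X j) /descend.
by rewrite Jc_child cardsU1 splitv_fresh IH.
Qed.

Lemma path_cell_flip_at X k j : k \notin Jc (path_cell X j) ->
  path_cell (flip_at k X) j = path_cell X j.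
Proof.
elim: j => [//|j IH]; rewrite /path_cell !iterS.
rewrite -/(path_cell X j) -/(path_cell (flip_at k X) j).
rewrite /descend Jc_child in_setU1 negb_or => /andP[_ kj].
by rewrite IH // splitv_flip_at //; apply/eqP; rewrite -notin_JcE.
Qed.

Lemma sum_ncell_path_cell_halves j : (j < d)%N ->
  (2 * \sum_X ncell X (path_cell X j.+1) = \sum_X ncell X (path_cell X j))%N.
Proof.
move=> jd; pose k X := splitv X (path_cell X j); pose phi X := flip_at (k X) X.
have fresh X : k X \notin Jc (path_cell X j).
  by apply: splitv_fresh; rewrite card_Jc_path_cell // ltnW.
have phi_path X : path_cell (phi X) j = path_cell X j by exact: path_cell_flip_at.
have phi_k X : k (phi X) = k X.
  by rewrite /k phi_path splitv_flip_at //; apply/eqP; rewrite -notin_JcE.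
have phi_path1 X : path_cell (phi X) j.+1 = path_cell X j.+1.
  rewrite /path_cell !iterS -/(path_cell X j) -/(path_cell (phi X) j) /descend.
  by rewrite -/(k X) -/(k (phi X)) phi_k phi_path.
have phiK : involutive phi by move=> X; rewrite /phi phi_k flip_atK.
rewrite mul2n -addnn {2}(reindex_inj (inv_inj phiK)) -big_split.
apply: eq_bigr => X _; rewrite phi_path1 /path_cell iterS -/(path_cell X j).
rewrite /descend -/(k X); apply: ncell_child_flip_at.
by apply/eqP; rewrite -notin_JcE.
Qed.

Lemma sum_ncell_path_cell j : (j <= d)%N ->
  ((\sum_X ncell X (path_cell X j)) * 2 ^ j = n * #|{: data n d}|)%N.
Proof.
elim: j => [_|j IH jd].
  by rewrite muln1 mulnC -sum_nat_const; apply: eq_bigr => X _; exact: ncell_root.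
rewrite -IH ?(ltnW jd) //.
by rewrite -(sum_ncell_path_cell_halves j jd) expnS mulnCA mulnA.
Qed.

Context {leaf : data n d -> cell d -> bool}.
Hypothesis leaf_small : forall X c, (ncell X c < 2)%N -> leaf X c.

Definition query_depth X :=
  #|[set k in qpath_rec (leaf X) (splitv X) x d (root_cell d)]|.

Lemma query_depth_gt X t : (t < query_depth X)%N ->
  (t < d)%N /\ (2 <= ncell X (path_cell X t))%N.
Proof.
rewrite /query_depth cardsE => /leq_trans/(_ (card_size _)) t_lt_size.
split; first exact: leq_trans t_lt_size (size_qpath_rec _ _ _ _ _).
by rewrite ltnNge; exact: contra (leaf_small X _) (qpath_rec_internal t_lt_size).
Qed.

Lemma card_query_depth_ge t : (0 < n)%N ->
  (#|[set X | t <= query_depth X]| * 2 ^ t <= n * #|{: data n d}|)%N.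
Proof.
move=> n_gt0; case: t => [|t].
  by rewrite muln1 (leq_trans (max_card _)) // leq_pmull.
have [td|dt] := ltnP t d; last first.
  suff -> : #|[set X | t < query_depth X]%N| = 0%N by [].
  apply: eq_card0 => X; rewrite inE; apply/negP.
  by move=> /query_depth_gt[/leq_trans/(_ dt)]; rewrite ltnn.
rewrite -(sum_ncell_path_cell t (ltnW td)) expnS mulnA leq_mul2r; apply/orP; right.
rewrite -sum_nat_const big_mkcond /=; apply: leq_sum => X _.
by case: ifP => //; rewrite inE => /query_depth_gt[].
Qed.

End FlipInvariantSplits.

Section GreedySplits.
Context {R : realType} {d n : nat} {TY : Type}.
Variables (F : seq (bool * TY) -> R) (Y : 'I_n -> TY).
Implicit Types (X : data n d) (c : cell d) (k : 'I_d).

Lemma maximizers_neq0 X c :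
  (#|Jc c| < d)%N -> maximizers F X Y c != finset.set0.
Proof.
move=> Jc_lt; have [k0 k0_free] : exists k0, k0 \notin Jc c.
  apply/existsP; apply: contraTT Jc_lt; rewrite negb_exists => /forallP Jc_full.
  rewrite -leqNgt (_ : Jc c = [set: 'I_d]) ?cardsT ?card_ord //.
  by apply/setP => k; rewrite finset.in_setT; exact/negbNE/Jc_full.
have := @arg_maxP _ _ _ k0 (fun k => k \notin Jc c) (objective F X Y c) k0_free.
case=> k k_free k_max; apply/finset.set0Pn.
by exists k; rewrite inE k_free; apply/forallP => k'; apply/implyP => /k_max.
Qed.

Hypothesis F_flip : forall s, F [seq (~~ p.1, p.2) | p <- s] = F s.

Lemma objective_flip_at X c k k' : c k = None ->
  objective F (flip_at k X) Y c k' = objective F X Y c k'.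
Proof.
move=> ck; rewrite /objective (eq_filter (fun i => in_cell_flip_at X c k i ck)).
have [->|k'k] := eqVneq k' k.
  rewrite -[RHS]F_flip -map_comp; congr F; apply: eq_map => i /=.
  by rewrite !ffunE eqxx.
by congr F; apply: eq_map => i /=; rewrite !ffunE (negbTE k'k).
Qed.

Lemma maximizers_flip_at X c k : c k = None ->
  maximizers F (flip_at k X) Y c = maximizers F X Y c.
Proof.
move=> ck; apply/setP => k'; rewrite !inE objective_flip_at //.
by congr (_ && _); apply: eq_forallb => k''; rewrite !objective_flip_at.
Qed.

End GreedySplits.

Theorem lemmaC2 (R : realType) (d n : nat) (TY TH : Type)
  (F : seq (bool * TY) -> R)
  (hF : forall s : seq (bool * TY), F [seq (~~ p.1, p.2) | p <- s] = F s)
  (sel : TH -> {set 'I_d} -> {set 'I_d} -> 'I_d)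
  (hsel : forall (th : TH) (A M : {set 'I_d}), M != finset.set0 -> sel th A M \in M)
  (stop : TH -> data n d -> ('I_n -> TY) -> cell d -> bool)
  (hstop : forall (th : TH) (X : data n d) (Y : 'I_n -> TY) (c : cell d),
     (#|[set i | in_cell c (X i)]| < 2)%N -> stop th X Y c)
  (prune : TH -> data n d -> ('I_n -> TY) -> cell d -> bool)
  (x : hcube d)
  (dT : measure_display) (T : measurableType dT) (mu : probability T R)
  (Yr : T -> 'I_n -> TY) (Thr : T -> TH) :
  (0 < n)%N ->
  (forall t : nat,
     (probJge F sel stop prune x mu Yr Thr t
        <= (Num.min (n%:R / 2 ^+ t) 1)%:E)%E) /\
  (expJ F sel stop prune x mu Yr Thr <= (ln n%:R / ln 2 + 2)%:E)%E.
Proof.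
move=> n_gt0.
have data_gt0 : (0 < #|{: data n d}|)%N.
  by apply/card_gt0P; exists [ffun=> [ffun=> true]].
have J_le w X : (#|Jquery F sel stop prune (Thr w) X (Yr w) x| <= d)%N.
  by rewrite (leq_trans (max_card _)) ?card_ord.
have tail_le w t : (#|[set X | t <= #|Jquery F sel stop prune (Thr w) X (Yr w) x|]|
    * 2 ^ t <= n * #|{: data n d}|)%N.
  apply: (card_query_depth_ge
    (splitv := fun X c => sel (Thr w) (Jc c) (maximizers F X (Yr w) c))) => //.
  - by move=> k X c ck; rewrite (maximizers_flip_at _ _ hF).
  - move=> X c /(maximizers_neq0 F (Yr w) X) /(hsel (Thr w) (Jc c)).
    by rewrite inE => /andP[].
  - by move=> X c /hstop ->.
split=> [t|]; apply: integral_le_const => w.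
- by rewrite divr_ge0 ?ler0n.
- by apply: ratio_le_min_halvings => //; exact: max_card.
- by rewrite divr_ge0 ?sumr_ge0 // => *; rewrite ler0n.
- rewrite -natr_sum (sum_card_layers (J_le w)) natr_sum mulr_suml.
  apply: le_trans _ (sum_min_halvings_le R n d n_gt0); apply: ler_sum => t _.
  by apply: ratio_le_min_halvings => //; exact: max_card.
Qed.
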